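(* Let $G$ be a connected non-complete graph. The following statements are equivalent. (i) $\mu_t(G)=n(G)-\gamma_c(G)$. (ii) There exists a connected dominating set $S$ of $G$ with $|S|=\gamma_c(G)$ such that for every pair $u,v$ of vertices of $G$ there exists a shortest $u,v$-path $u=y_0,y_1,\dots,y_{k'}=v$ with $\{y_1,\dots,y_{k'-1}\}\subseteq S$.
   Context: All graphs are finite, simple and undirected; $n(G)$ denotes the order of $G$. A connected dominating set of $G$ is a dominating set $D$ such that $G[D]$ is connected; the connected domination number $\gamma_c(G)$ is the minimum cardinality of a connected dominating set. Let $G$ be a connected graph and $X\subseteq V(G)$. Two vertices $x,y\in V(G)$ are $X$-visible if there exists a shortest $x,y$-path in $G$ none of whose internal vertices (i.e., vertices other than $x$ and $y$) belongs to $X$. The set $X$ is a total mutual-visibility set of $G$ if every two vertices of $G$ are $X$-visible (the empty set is allowed). The total mutual-visibility number $\mu_t(G)$ is the maximum cardinality of a total mutual-visibility set of $G$. *)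

(* A finite simple graph: vertex type T : finType,
   adjacency e : rel T, assumed symmetric and irreflexive in the theorem. *)
From mathcomp Require Import all_boot.
From mathcomp Require Import boolp.
Set Implicit Arguments. Unset Strict Implicit. Unset Printing Implicit Defensive.

Section Graphs.
Variables (T : finType) (e : rel T).

(* A u,v-walk is a sequence p = [:: y1; ...; yk] with u :: p an e-path
   ending at v; its length is size p. *)
Definition walk (u v : T) (p : seq T) : bool := path e u p && (last u p == v).

(* a shortest u,v-path: a u,v-walk of minimum length (necessarily a path) *)
Definition shortest_path (u v : T) (p : seq T) : Prop :=
  walk u v p /\ forall q, walk u v q -> size p <= size q.

(* internal vertices y1, ..., y_{k-1} of the walk u :: p *)
Definition internal (p : seq T) : seq T := take (size p).-1 p.

Definition graph_connected : Prop := forall x y : T, connect e x y.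

Definition complete_graph : Prop := forall x y : T, x != y -> e x y.

Definition dominating (D : {set T}) : Prop :=
  forall x : T, x \in D \/ exists2 y, y \in D & e x y.

Definition induced_connected (D : {set T}) : Prop :=
  forall x y, x \in D -> y \in D ->
    connect [rel a b | [&& e a b, a \in D & b \in D]] x y.

Definition connected_dominating (D : {set T}) : Prop :=
  dominating D /\ induced_connected D.

Definition connected_dominating_b (D : {set T}) : bool :=
  `[< connected_dominating D >].

(* gamma_c(G): minimum size of a connected dominating set
   (#|T| is the default, attained by T itself when G is connected) *)
Definition gamma_c : nat :=
  \big[minn/#|T|]_(D : {set T} | connected_dominating_b D) #|D|.

Definition X_visible (X : {set T}) (x y : T) : Prop :=
  exists p, shortest_path x y p /\ forall z, z \in internal p -> z \notin X.

Definition total_mutual_visibility (X : {set T}) : Prop :=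
  forall x y : T, X_visible X x y.

Definition tmv_b (X : {set T}) : bool := `[< total_mutual_visibility X >].

(* mu_t(G): maximum size of a total mutual-visibility set (set0 qualifies) *)
Definition mu_t : nat := \max_(X : {set T} | tmv_b X) #|X|.

End Graphs.

From mathcomp Require Import all_boot.
From mathcomp Require Import boolp.

Set Implicit Arguments.
Unset Strict Implicit.
Unset Printing Implicit Defensive.

(* The key observation is that X is a total mutual-visibility set exactly
   when every pair of vertices is joined by a shortest path whose internal
   vertices all lie in the complement S = V \ X.  For a non-complete graph
   such a complement S is a connected dominating set: a vertex of X sees
   some non-neighbour (or some non-adjacent pair exists) through a shortest
   path whose first internal vertex lies in S, and any two vertices of S
   are joined by a path all of whose vertices are in S.  Hence
   gamma_c <= |S| = n - |X| for every total mutual-visibility set X, i.e.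
   mu_t <= n - gamma_c.  Equality means that a maximum set X has a
   complement of size gamma_c, which is the set required in (ii); conversely
   the complement of the set S of (ii) is total mutual-visibility of size
   n - gamma_c. *)

Section Graph.
Variables (T : finType) (e : rel T).

Lemma gamma_c_min (S : {set T}) : connected_dominating e S -> gamma_c e <= #|S|.
Proof.
move=> cdS; rewrite /gamma_c.
have cdSb : connected_dominating_b e S by apply/asboolP.
have : S \in index_enum {set T} by rewrite mem_index_enum.
elim: (index_enum _) => [//|D r IH]; rewrite inE big_cons.
case/orP => [/eqP <-|Sr]; first by rewrite cdSb geq_minl.
case: ifP => _; last exact: IH.
by rewrite geq_min IH ?orbT.
Qed.

Lemma shortest_path_exists u v : connect e u v -> exists p, shortest_path e u v p.
Proof.
move=> /connectP [p pp lp].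
have ex_len : exists n, `[< exists p, walk e u v p /\ size p = n >].
  by exists (size p); apply/asboolP; exists p; rewrite /walk pp -lp eqxx.
case: (ex_minnP ex_len) => n /asboolP [q [wq sq]] min_n.
exists q; split => // r wr; rewrite sq; apply: min_n; apply/asboolP; by exists r.
Qed.

Lemma mem_internal_or_last x (p : seq T) z :
  z \in p -> z \in internal p \/ z = last x p.
Proof.
case/lastP: p => [//|q w]; rewrite /internal size_rcons /= -cats1 take_size_cat //.
rewrite mem_cat inE last_cat /= => /orP [zq|/eqP ->]; by [left | right].
Qed.

Lemma first_internal a b p : shortest_path e a b p -> a != b -> ~~ e a b ->
  exists2 z, z \in internal p & e a z.
Proof.
move=> [/andP [pp lp] _] ab nab; case: p pp lp => [|z [|w q]] /=.
- by move=> _ /eqP ba; rewrite ba eqxx in ab.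
- by rewrite andbT => eaz /eqP zb; rewrite -zb eaz in nab.
- by move=> /andP [eaz _] _; exists z; rewrite // /internal /= inE eqxx.
Qed.

Lemma nonadjacent_pair : ~ complete_graph e -> exists a b, a != b /\ ~~ e a b.
Proof.
move=> nc; apply: contrapT => no_pair; apply: nc => a b ab.
apply: contrapT => nab; apply: no_pair; exists a, b; split => //; exact/negP.
Qed.

Lemma tmvP (X : {set T}) :
  total_mutual_visibility e X <->
  forall u v, exists p, shortest_path e u v p /\ {subset internal p <= ~: X}.
Proof.
split=> vis u v; case: (vis u v) => p [sp ip]; exists p; split => // z zi.
- by rewrite in_setC ip.
- by have := ip z zi; rewrite in_setC.
Qed.

Lemma tmv_set0 : graph_connected e -> total_mutual_visibility e set0.
Proof.
move=> conn; apply/tmvP => u v; case: (shortest_path_exists (conn u v)) => p sp.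
by exists p; split => // z _; rewrite setC0 inE.
Qed.

Lemma tmv_complement_dominating (X : {set T}) :
  ~ complete_graph e -> total_mutual_visibility e X -> dominating e (~: X).
Proof.
move=> nc /tmvP vis x; rewrite in_setC; case xX: (x \in X); [right | by left].
have [[y yx nxy]|all_adj] := pselect (exists2 y, y != x & ~~ e x y).
  case: (vis x y) => p [sp ip].
  have xy : x != y by rewrite eq_sym.
  have [z zi exz] := first_internal sp xy nxy.
  by exists z; first exact: ip.
have [a [b [ab nab]]] := nonadjacent_pair nc.
case: (vis a b) => p [sp ip]; have [z zi eaz] := first_internal sp ab nab.
have zS := ip z zi; exists z => //.
apply: contrapT => nxz; apply: all_adj; exists z; last exact/negP.
by apply: contraTneq zS => ->; rewrite in_setC xX.
Qed.

(* The complement of a total mutual-visibility set induces a connected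
   subgraph: a shortest path between two of its vertices stays inside it. *)
Lemma tmv_complement_connected (X : {set T}) :
  total_mutual_visibility e X -> induced_connected e (~: X).
Proof.
move=> /tmvP vis x y xS yS; case: (vis x y) => p [[/andP [pp lp] _] ip].
apply/connectP; exists p; last by rewrite (eqP lp).
apply: (sub_in_path (P := mem (~: X)) (e := e)) pp => [a b aS bS eab|].
  by rewrite /= eab aS bS.
apply/allP => z; rewrite inE => /orP [/eqP -> //|zp].
by case: (mem_internal_or_last x zp) => [/ip|->] //; rewrite (eqP lp).
Qed.

Lemma tmv_complement_cds (X : {set T}) : ~ complete_graph e ->
  total_mutual_visibility e X -> connected_dominating e (~: X).
Proof.
move=> nc tX; split; [exact: tmv_complement_dominating | exact: tmv_complement_connected].
Qed.

Lemma tmv_card_le (X : {set T}) : ~ complete_graph e ->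
  total_mutual_visibility e X -> #|X| <= #|T| - gamma_c e.
Proof.
move=> nc tX; have := gamma_c_min (tmv_complement_cds nc tX).
rewrite cardsCs setCK => gamma_le.
have gamma_le_n : gamma_c e <= #|T| := leq_trans gamma_le (leq_subr _ _).
by rewrite leq_subRL // addnC -leq_subRL ?max_card.
Qed.

Lemma mu_t_le : ~ complete_graph e -> mu_t e <= #|T| - gamma_c e.
Proof. by move=> nc; apply/bigmax_leqP => X /asboolP; exact: tmv_card_le. Qed.

Lemma mu_t_attained : graph_connected e ->
  exists2 X : {set T}, total_mutual_visibility e X & #|X| = mu_t e.
Proof.
move=> conn; have t0 : tmv_b e set0 by apply/asboolP; exact: tmv_set0.
have := @bigmax_eq_arg _ set0 (tmv_b e) (fun X : {set T} => #|X|) t0.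
by case: arg_maxnP => // X /asboolP tX _ hX; exists X.
Qed.

End Graph.

Theorem proposition2p6 (T : finType) (e : rel T) :
  symmetric e -> irreflexive e ->
  graph_connected e -> ~ complete_graph e ->
  (mu_t e = #|T| - gamma_c e <->
   exists S : {set T},
     [/\ connected_dominating e S, #|S| = gamma_c e &
         forall u v : T, exists p, shortest_path e u v p /\
           {subset internal p <= S}]).
Proof.
move=> _ _ conn nc; split=> [mu_eq | [S [cdS cardS vis]]].
- (* the complement of a maximum total mutual-visibility set works *)
  have [X tX cardX] := mu_t_attained conn.
  exists (~: X); split; [exact: tmv_complement_cds | | exact/tmvP].
  have gamma_le_n := leq_trans (gamma_c_min (tmv_complement_cds nc tX)) (max_card _).
  by rewrite cardsCs setCK cardX mu_eq subKn.
- (* the complement of S is a total mutual-visibility set of size n - gamma_c *)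
  have tX : tmv_b e (~: S) by apply/asboolP/tmvP; rewrite setCK.
  apply/eqP; rewrite eqn_leq mu_t_le //=.
  by apply: leq_trans (leq_bigmax_cond _ tX); rewrite cardsCs setCK cardS.
Qed.
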